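(* Let $r\ge 1$ and $n\ge 3r+6$ be integers. Then $\rho(K_{3,n-3})>\rho(H'_{n,r})$.
   Context: $\rho$ denotes the spectral radius (largest adjacency eigenvalue). $K_1\vee rK_3$ is the join of a single vertex with $r$ disjoint triangles; let $u$ be its vertex of degree $3r$ (any vertex if $r=1$). In $K_{3,n-3r-3}$ (complete bipartite with parts of sizes $3$ and $n-3r-3$), let $vw$ be an edge where $v$ has degree $n-3r-3$ and $w$ has degree $3$. $H'_{n,r}$ is the graph obtained from the disjoint union of $K_1\vee rK_3$ and $K_{3,n-3r-3}$ by identifying $u$ with $w$. *)

From HB Require Import structures.
From mathcomp Require Import all_boot all_order all_algebra.
From mathcomp Require Import polyrcf.
Set Implicit Arguments. Unset Strict Implicit. Unset Printing Implicit Defensive.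
Import Order.TTheory GRing.Theory Num.Theory.
Local Open Scope ring_scope.

Definition adjmx (R : nzRingType) (n : nat) (e : nat -> nat -> bool) : 'M[R]_n :=
  \matrix_(i < n, j < n) (e i j)%:R.

(* Spectral radius = largest (real) eigenvalue of a real-closed-field matrix:
   the maximum of the real roots of its characteristic polynomial.
   (The adjacency matrices considered are symmetric, so all eigenvalues are real
   and the spectrum is nonempty; the default 0 is never the binding value since
   the largest eigenvalue of an adjacency matrix is >= 0.) *)
Definition spec_radius (R : rcfType) (n : nat) (A : 'M[R]_n) : R :=
  \big[Num.max/0]_(x <- rootsR (char_poly A)) x.

Definition K3_edge (i j : nat) : bool :=
  ((i < 3) && (3 <= j))%N || ((j < 3) && (3 <= i))%N.

(* H'_{n,r} on {0,...,n-1}: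
   - vertex 0 is u = w (centre of K_1 v rK_3, and a degree-3 vertex of K_{3,n-3r-3});
   - vertices 1..3r form the r triangles {3k+1,3k+2,3k+3}, k < r, all joined to 0;
   - K_{3,n-3r-3} has the 3-part {3r+1,3r+2,3r+3} and the (n-3r-3)-part
     {0} u {3r+4,...,n-1}. *)
Definition tri_vx (r i : nat) : bool := (1 <= i <= 3 * r)%N.
Definition bipA (r i : nat) : bool := (3 * r + 1 <= i <= 3 * r + 3)%N.
Definition bipB (r i : nat) : bool := (i == 0)%N || (3 * r + 4 <= i)%N.

Definition Hp_edge (r : nat) (i j : nat) : bool :=
  [|| (i == 0)%N && tri_vx r j,
      (j == 0)%N && tri_vx r i,
      [&& tri_vx r i, tri_vx r j, i != j & (i.-1 %/ 3 == j.-1 %/ 3)%N],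
      bipA r i && bipB r j
    | bipA r j && bipB r i].

(* lam := sqrt (3 (n - 3)) is an eigenvalue of K_{3,n-3}, with eigenvector lam on
   the 3-part and 3 on the other part.  For H'_{n,r} take the positive vertex
   weights c = 18 r lam at the identified vertex u = w, 3 lam^2 on the triangle
   vertices, 2 (lam^2 - 1) on the 3-part of K_{3,n-3r-3} and 6 lam elsewhere; a
   count of neighbours in each class shows (c A)_j < lam c_j at every vertex j.
   Comparing an eigenvector v at a vertex maximising |v_i| / c_i then shows that
   every eigenvalue of H'_{n,r} has modulus less than lam. *)

From HB Require Import structures.
From mathcomp Require Import all_boot all_order all_algebra.
From mathcomp Require Import polyrcf.
From mathcomp Require Import zify ring lra.

Set Implicit Arguments.
Unset Strict Implicit.
Unset Printing Implicit Defensive.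

Import Order.TTheory GRing.Theory Num.Theory.
Local Open Scope ring_scope.

Lemma mem_rootsR_char_poly (R : rcfType) n (A : 'M[R]_n) x :
  (x \in rootsR (char_poly A)) = eigenvalue A x.
Proof.
by rewrite -(roots_on_rootsR (monic_neq0 (char_poly_monic A))) eigenvalue_root_char.
Qed.

Lemma eigenvalue_le_spec_radius (R : rcfType) n (A : 'M[R]_n) x :
  eigenvalue A x -> x <= spec_radius A.
Proof. by rewrite -mem_rootsR_char_poly => Ax; apply: le_bigmax_seq. Qed.

Lemma spec_radius_lt (R : rcfType) n (A : 'M[R]_n) mu :
  0 < mu -> (forall x, eigenvalue A x -> x < mu) -> spec_radius A < mu.
Proof.
move=> mu_gt0 A_lt; rewrite /spec_radius big_seq.
by apply: bigmax_lt => // x; rewrite mem_rootsR_char_poly; apply: A_lt.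
Qed.

Lemma norm_eigenvalue_lt (R : realFieldType) n (A : 'M[R]_n) (w : 'I_n -> R) mu x :
  (forall i j, 0 <= A i j) -> (forall i, 0 < w i) ->
  (forall j, \sum_i w i * A i j < mu * w j) -> eigenvalue A x -> `|x| < mu.
Proof.
move=> A_ge0 w_gt0 wA_lt /eigenvalueP[v vA v_neq0].
have [i0 vi0_neq0] : exists i, v 0 i != 0.
  apply/existsP; apply: contraNT v_neq0 => /existsPn v0.
  by apply/eqP/rowP => i; rewrite mxE; apply/eqP/negPn/v0.
pose t i := `|v 0 i| / w i.
have [j _ t_max] := @arg_maxP _ R _ i0 xpredT t isT.
have v_le i : `|v 0 i| <= t j * w i by rewrite -ler_pdivrMr //; apply: t_max.
have tj_gt0 : 0 < t j.
  by apply: lt_le_trans (t_max i0 isT); rewrite divr_gt0 ?normr_gt0.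
have vj : `|v 0 j| = t j * w j by rewrite divfK ?gt_eqF.
have xv_le : `|x| * `|v 0 j| <= t j * \sum_i w i * A i j.
  have /rowP/(_ j) := vA; rewrite !mxE => xvj.
  rewrite -normrM -xvj mulr_sumr; apply: le_trans (ler_norm_sum _ _ _) _.
  apply: ler_sum => i _; rewrite normrM (ger0_norm (A_ge0 i j)) mulrA.
  exact: ler_wpM2r.
rewrite -(ltr_pM2r (_ : 0 < `|v 0 j|)); last by rewrite vj mulr_gt0.
by apply: le_lt_trans xv_le _; rewrite vj mulrCA ltr_pM2l.
Qed.

Lemma sum_nat_true a b (P : pred nat) :
  (forall i, (a <= i < b)%N -> P i) -> (\sum_(a <= i < b) P i = b - a)%N.
Proof.
by move=> P_true; rewrite -[RHS]muln1 -sum_nat_const_nat; apply: eq_big_nat => i /P_true ->.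
Qed.

Lemma sum_nat_false a b (P : pred nat) :
  (forall i, (a <= i < b)%N -> ~~ P i) -> (\sum_(a <= i < b) P i = 0)%N.
Proof. by move=> P_false; rewrite big_nat big1 // => i /P_false/negbTE ->. Qed.

Lemma sum_nat_all_but a b j (P : pred nat) : (a <= j < b)%N -> ~~ P j ->
  (forall i, (a <= i < b)%N -> i != j -> P i) -> (\sum_(a <= i < b) P i = (b - a).-1)%N.
Proof.
move=> /andP[a_le_j j_lt_b] Pj P_true.
rewrite (big_cat_nat a_le_j (ltnW j_lt_b)) [\sum_(j <= i < b) _]big_ltn //= (negbTE Pj).
by rewrite !sum_nat_true => [|i i_range|i i_range]; try apply: P_true; lia.
Qed.

Lemma sum_block_weight (R : pzSemiRingType) (w : nat -> R) (P : pred nat) a b c :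
  (forall i, (a <= i < b)%N -> w i = c) ->
  \sum_(a <= i < b) w i * (P i)%:R = c * (\sum_(a <= i < b) P i)%:R.
Proof. by move=> w_c; rewrite natr_sum mulr_sumr; apply: eq_big_nat => i /w_c ->. Qed.

Definition cbip_edge (a i j : nat) : bool :=
  ((i < a) && (a <= j))%N || ((j < a) && (a <= i))%N.

Lemma eigenvalue_cbip (R : numFieldType) a n (lam : R) :
  (0 < a < n)%N -> lam ^+ 2 = (a * (n - a))%:R ->
  eigenvalue (adjmx R n (cbip_edge a)) lam.
Proof.
move=> /andP[a_gt0 a_lt_n] lam2.
pose v i : R := if (i < a)%N then lam else a%:R.
apply/eigenvalueP; exists (\row_(i < n) v i); last first.
  apply: contraTneq a_gt0 => /rowP/(_ (Ordinal a_lt_n)).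
  by rewrite !mxE /v ltnn => /eqP; rewrite pnatr_eq0 => /eqP->.
apply/rowP => j; rewrite !mxE; under eq_bigr do rewrite !mxE.
rewrite -(big_mkord xpredT (fun i => v i * (cbip_edge a i j)%:R)).
rewrite (big_cat_nat (leq0n a) (ltnW a_lt_n)) /= /v /cbip_edge.
rewrite (sum_block_weight _ (c := lam)) => [|i /andP[_ ->]] //.
rewrite (sum_block_weight _ (c := a%:R)) => [|i /andP[a_le_i _]];
  last by rewrite ltnNge a_le_i.
have [j_lt_a | j_ge_a] := ltnP j a.
- rewrite sum_nat_false => [|i]; last by lia.
  rewrite sum_nat_true => [|i]; last by lia.
  by rewrite mulr0 add0r -natrM -lam2 expr2.
- rewrite sum_nat_true => [|i]; last by lia.
  rewrite sum_nat_false => [|i]; last by lia.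
  by rewrite subn0 mulr0 addr0.
Qed.

Definition nbr_count (e : nat -> nat -> bool) (a b j : nat) : nat :=
  \sum_(a <= i < b) e i j.

Section HprimeNeighbours.

Variables (r n : nat).

Lemma Hp_nbrs_center :
  [/\ ~~ Hp_edge r 0 0, nbr_count (Hp_edge r) 1 (3 * r + 1) 0 = 3 * r,
      nbr_count (Hp_edge r) (3 * r + 1) (3 * r + 4) 0 = 3
    & nbr_count (Hp_edge r) (3 * r + 4) n 0 = 0]%N.
Proof.
rewrite /nbr_count /Hp_edge /tri_vx /bipA /bipB.
by split; [lia | rewrite sum_nat_true | rewrite sum_nat_true | rewrite sum_nat_false];
  move=> *; lia.
Qed.

Lemma Hp_nbrs_tri j : tri_vx r j ->
  [/\ Hp_edge r 0 j, nbr_count (Hp_edge r) 1 (3 * r + 1) j = 2,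
      nbr_count (Hp_edge r) (3 * r + 1) (3 * r + 4) j = 0
    & nbr_count (Hp_edge r) (3 * r + 4) n j = 0]%N.
Proof.
rewrite /nbr_count /Hp_edge /tri_vx /bipA /bipB => j_tri.
set k := (j.-1 %/ 3)%N.
have j_in : (3 * k + 1 <= j < 3 * k + 4)%N by lia.
split; [lia | | rewrite sum_nat_false | rewrite sum_nat_false]; move=> *; try lia.
rewrite (@big_cat_nat _ _ _ (3 * k + 1) 1)
  ?(@big_cat_nat _ _ _ (3 * k + 4) (3 * k + 1) (3 * r + 1)) /=; try lia.
by rewrite (sum_nat_all_but j_in) ?sum_nat_false; move=> *; lia.
Qed.

Lemma Hp_nbrs_bipA j : bipA r j ->
  [/\ Hp_edge r 0 j, nbr_count (Hp_edge r) 1 (3 * r + 1) j = 0,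
      nbr_count (Hp_edge r) (3 * r + 1) (3 * r + 4) j = 0
    & nbr_count (Hp_edge r) (3 * r + 4) n j = n - (3 * r + 4)]%N.
Proof.
rewrite /nbr_count /Hp_edge /tri_vx /bipA /bipB => j_A.
by split; [lia | rewrite sum_nat_false | rewrite sum_nat_false | rewrite sum_nat_true];
  move=> *; lia.
Qed.

Lemma Hp_nbrs_bipB j : (3 * r + 4 <= j)%N ->
  [/\ ~~ Hp_edge r 0 j, nbr_count (Hp_edge r) 1 (3 * r + 1) j = 0,
      nbr_count (Hp_edge r) (3 * r + 1) (3 * r + 4) j = 3
    & nbr_count (Hp_edge r) (3 * r + 4) n j = 0]%N.
Proof.
rewrite /nbr_count /Hp_edge /tri_vx /bipA /bipB => j_B.
by split; [lia | rewrite sum_nat_false | rewrite sum_nat_true | rewrite sum_nat_false];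
  move=> *; lia.
Qed.

End HprimeNeighbours.

Section HprimeTestVector.

Variables (R : realFieldType) (r n : nat) (lam : R).
Hypotheses (r_gt0 : (0 < r)%N) (n_ge : (3 * r + 6 <= n)%N) (lam_gt0 : 0 < lam)
  (lam2 : lam ^+ 2 = (3 * (n - 3))%:R).

Definition Hp_weight (i : nat) : R :=
  if i == 0%N then (18 * r)%:R * lam
  else if tri_vx r i then 3 * lam ^+ 2
  else if bipA r i then 2 * (lam ^+ 2 - 1) else 6 * lam.

Lemma Hp_weight_tri i : tri_vx r i -> Hp_weight i = 3 * lam ^+ 2.
Proof.
move=> i_tri; have i_neq0 : i != 0%N by move: i_tri; rewrite /tri_vx; lia.
by rewrite /Hp_weight (negbTE i_neq0) i_tri.
Qed.

Lemma Hp_weight_bipA i : bipA r i -> Hp_weight i = 2 * (lam ^+ 2 - 1).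
Proof.
move=> i_A; have [i_neq0 i_ntri] : i != 0%N /\ ~~ tri_vx r i.
  by move: i_A; rewrite /bipA /tri_vx; lia.
by rewrite /Hp_weight (negbTE i_neq0) (negbTE i_ntri) i_A.
Qed.

Lemma Hp_weight_bipB i : (3 * r + 4 <= i)%N -> Hp_weight i = 6 * lam.
Proof.
move=> i_B; have [i_neq0 i_ntri i_nA] : [/\ i != 0%N, ~~ tri_vx r i & ~~ bipA r i].
  by rewrite /bipA /tri_vx; split; lia.
by rewrite /Hp_weight (negbTE i_neq0) (negbTE i_ntri) (negbTE i_nA).
Qed.

Lemma lam2_ge : 9 * r%:R + 9 <= lam ^+ 2.
Proof.
rewrite lam2 natrM natrB ?ler_nat; last by lia.
by have := n_ge; rewrite -(ler_nat R) natrD natrM; lra.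
Qed.

Lemma Hp_weight_gt0 i : 0 < Hp_weight i.
Proof.
have lam2_ge9 := lam2_ge; have r_ge0 := ler0n R r.
rewrite /Hp_weight; repeat case: ifP => _.
- by rewrite mulr_gt0 // ltr0n muln_gt0.
- lra.
- lra.
- by rewrite mulr_gt0.
Qed.

Lemma Hp_colsumE j :
  \sum_(0 <= i < n) Hp_weight i * (Hp_edge r i j)%:R =
    (18 * r)%:R * lam * (Hp_edge r 0 j)%:R
  + 3 * lam ^+ 2 * (nbr_count (Hp_edge r) 1 (3 * r + 1) j)%:R
  + 2 * (lam ^+ 2 - 1) * (nbr_count (Hp_edge r) (3 * r + 1) (3 * r + 4) j)%:R
  + 6 * lam * (nbr_count (Hp_edge r) (3 * r + 4) n j)%:R.
Proof.
rewrite (@big_cat_nat _ _ _ 1 0 n) ?(@big_cat_nat _ _ _ (3 * r + 1) 1 n)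
  ?(@big_cat_nat _ _ _ (3 * r + 4) (3 * r + 1) n); try lia.
rewrite big_nat1 /= !addrA; congr (_ + _ + _ + _).
- by apply: sum_block_weight => i ?; apply: Hp_weight_tri; rewrite /tri_vx; lia.
- by apply: sum_block_weight => i ?; apply: Hp_weight_bipA; rewrite /bipA; lia.
- by apply: sum_block_weight => i /andP[? _]; apply: Hp_weight_bipB.
Qed.

Lemma Hp_weight_subinvariant (j : 'I_n) :
  \sum_(i < n) Hp_weight i * adjmx R n (Hp_edge r) i j < lam * Hp_weight j.
Proof.
under eq_bigr do rewrite mxE.
rewrite -(big_mkord xpredT (fun i : nat => Hp_weight i * (Hp_edge r i j)%:R)) Hp_colsumE.
have r_ge1 : 1 <= r%:R :> R by rewrite ler1n.
(* [lra] and [nra] do not see section hypotheses. *)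
have lam2_ge9 := lam2_ge; have lam_pos := lam_gt0.
have lamE : lam ^+ 2 = 3 * n%:R - 9 by rewrite lam2 natrM natrB; [lra | lia].
have [-> | j_neq0] := eqVneq (j : nat) 0%N.
  have [/negbTE -> -> -> ->] := Hp_nbrs_center r n.
  rewrite /Hp_weight /= !natrM; nra.
have [j_tri | j_ntri] := boolP (tri_vx r j).
  have [-> -> -> ->] := Hp_nbrs_tri n j_tri; rewrite Hp_weight_tri //=.
  (* 3 (lam^2 - 2 lam - 6 r) >= lam^2 - 6 lam + 18 = (lam - 3)^2 + 9 *)
  have tri_key : 6 * r%:R + 2 * lam < lam ^+ 2 by have := sqr_ge0 (lam - 3); nra.
  rewrite natrM; nra.
have [j_A | j_nA] := boolP (bipA r j).
  have [-> -> -> ->] := Hp_nbrs_bipA n j_A; rewrite Hp_weight_bipA //=.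
  rewrite natrM natrB ?natrD ?natrM; [nra | lia].
have j_B : (3 * r + 4 <= j)%N by move: j_neq0 j_ntri j_nA; rewrite /tri_vx /bipA; lia.
have [/negbTE -> -> -> ->] := Hp_nbrs_bipB n j_B; rewrite Hp_weight_bipB //=.
nra.
Qed.

End HprimeTestVector.

Theorem corollary4p4 (R : rcfType) (r n : nat) :
  (1 <= r)%N -> (3 * r + 6 <= n)%N ->
  spec_radius (adjmx R n (Hp_edge r)) < spec_radius (adjmx R n K3_edge).
Proof.
move=> r_gt0 n_ge.
pose lam : R := Num.sqrt (3 * (n - 3))%:R.
have lam_gt0 : 0 < lam by rewrite sqrtr_gt0 ltr0n; lia.
have lam2 : lam ^+ 2 = (3 * (n - 3))%:R by rewrite sqr_sqrtr ?ler0n.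
apply: (@lt_le_trans _ _ lam).
- apply: spec_radius_lt => // x x_eig; apply: le_lt_trans (ler_norm x) _.
  apply: (norm_eigenvalue_lt (w := fun i => Hp_weight r lam i)) x_eig.
  + by move=> i j; rewrite mxE ler0n.
  + exact: Hp_weight_gt0 r_gt0 n_ge lam_gt0 lam2.
  + exact: Hp_weight_subinvariant r_gt0 n_ge lam_gt0 lam2.
- by apply/eigenvalue_le_spec_radius/(eigenvalue_cbip (a := 3)); [lia | rewrite lam2].
Qed.
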